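(* For all integers $t,k>3$ satisfying $(2t)^k-1<t^k(2t-1)$, there exists a simple undirected graph $U$ with $t^k$ vertices, minimum degree at least $2$ and diameter $k$, such that every directed graph $G$ with $U(G)=U$ is an equilibrium graph in the MAX version of the bounded budget network creation game whose budgets are the outdegrees of the vertices of $G$.
   Context: Bounded budget network creation game $(b_1,\dots,b_n)$-BG: $n$ players with integer budgets $0\le b_i\le n-1$. A strategy of player $i$ is a set $S_i\subseteq\{1,\dots,n\}\setminus\{i\}$ with $|S_i|=b_i$; a profile is realized by the directed graph $G$ on $u_1,\dots,u_n$ with an arc $\overrightarrow{u_iu_j}$ iff $j\in S_i$. Thus a directed graph $G$ (without loops) in which vertex $u_i$ has outdegree $b_i$ is a realization of $(b_1,\dots,b_n)$-BG. $U(G)$ is the undirected multigraph obtained by ignoring arc directions. $\operatorname{dist}(u,v)$ is the distance in $U(G)$, defined as $n^2$ between different components. MAX cost: $c_{MAX}(u)=\max_v\operatorname{dist}(u,v)+(\kappa-1)n^2$, $\kappa$ the number of components of $U(G)$. An equilibrium graph in the MAX version is a realization in which no vertex can decrease its MAX cost by changing its own strategy while the other strategies are fixed. *)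

From mathcomp Require Import all_boot.
Set Implicit Arguments. Unset Strict Implicit. Unset Printing Implicit Defensive.

Section BBNCG.
Variable n : nat.
Implicit Types (a e : rel 'I_n) (x y u : 'I_n).

(* Undirected adjacency of U(a): u ~ v iff an arc in either direction
   (parallel arcs of the multigraph do not affect distances). *)
Definition uadj a : rel 'I_n := fun x y => a x y || a y x.

Fixpoint within a (k : nat) x y : bool :=
  if k is k'.+1 then within a k' x y || [exists z, within a k' x z && uadj a z y]
  else x == y.

(* dist in U(a): the least k with within a k x y (any shortest walk has
   length < n), and n^2 between different components. *)
Definition dist a x y : nat :=
  let d := find (fun k => within a k x y) (iota 0 n) in
  if d < n then d else n ^ 2.

Definition ncomp a : nat := #|[set [set y | within a n x y] | x : 'I_n]|.

Definition cMAX a u : nat := \max_(v : 'I_n) dist a u v + (ncomp a - 1) * n ^ 2.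

Definition outdeg a u : nat := #|[set v | a u v]|.

Definition deviate a u (S : {set 'I_n}) : rel 'I_n :=
  fun x y => if x == u then y \in S else a x y.

(* equilibrium graph in the MAX version of the game whose budgets are
   the outdegrees of a (a must be loopless to be a realization). *)
Definition MAX_equilibrium a : Prop :=
  (forall x, ~~ a x x) /\
  forall u (S : {set 'I_n}), u \notin S -> #|S| = outdeg a u ->
    cMAX a u <= cMAX (deviate a u S) u.

Definition simple_graph e : Prop := symmetric e /\ irreflexive e.

Definition min_degree_ge e (d : nat) : Prop := forall v, d <= #|[set w | e v w]|.

Definition diameter e : nat := \max_(x : 'I_n) \max_(y : 'I_n) dist e x y.

(* U(a) = e : for every pair, the number of arcs between x and y
   (counted with multiplicity, both directions) equals the number of
   edges of e between them. *)
Definition underlying_is a e : Prop :=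
  forall x y, (a x y : nat) + (a y x : nat) = (e x y : nat) /\ (x == y -> ~~ a x y).

End BBNCG.

From mathcomp Require Import all_boot zify.
Set Implicit Arguments. Unset Strict Implicit. Unset Printing Implicit Defensive.

(* The witness is the undirected de Bruijn graph on the t^k words of length k
   over t letters: k shifts turn any word into any other, so the diameter is k,
   and every vertex has degree at most 2t.  For any orientation G, a vertex u
   therefore has cost at most k.  If u replaces its out-arcs by as many new ones,
   u keeps at most outdeg + indeg <= 2t neighbours and every other vertex gains
   at most one, so by the Moore bound the ball of radius k - 1 around u has at
   most sum_(i<k) (2t)^i < t^k vertices: some vertex stays at distance >= k. *)

Lemma ltn_pmul_add a b p q : a < p -> b < q -> a * q + b < p * q.
Proof.
move=> ap bq; apply: (@leq_trans (a * q + q)); first by rewrite ltn_add2l.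
by rewrite -mulSnr leq_mul2r ap orbT.
Qed.

Lemma sum_expn_lt t k : 0 < t -> (2 * t) ^ k - 1 < t ^ k * (2 * t - 1) ->
  \sum_(i < k) (2 * t) ^ i < t ^ k.
Proof.
move=> t_gt0; have pos : 0 < 2 * t - 1 by lia.
by rewrite subn1 predn_exp -subn1 mulnC ltn_pmul2r.
Qed.

(* Reading words of length k over t letters as base-t numerals, [splice t k x y i]
   is the last k - i letters of x followed by the first i letters of y. *)
Definition splice t k x y i := x %% t ^ (k - i) * t ^ i + y %/ t ^ (k - i).

Lemma splice_lt t k x y i : 0 < t -> i <= k -> y < t ^ k -> splice t k x y i < t ^ k.
Proof.
move=> t_gt0 ik hy; have tp m : 0 < t ^ m by rewrite expn_gt0 t_gt0.
have -> : t ^ k = t ^ (k - i) * t ^ i by rewrite -expnD subnK.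
rewrite /splice.
apply: ltn_pmul_add; first by rewrite ltn_mod.
by rewrite ltn_divLR // -expnD subnKC.
Qed.

Lemma splice0 t k x y : x < t ^ k -> y < t ^ k -> splice t k x y 0 = x.
Proof. by move=> hx hy; rewrite /splice subn0 expn0 muln1 divn_small // addn0 modn_small. Qed.

Lemma spliceK t k x y : splice t k x y k = y.
Proof. by rewrite /splice subnn expn0 modn1 mul0n divn1. Qed.

Lemma splice_shift t k x y i : 0 < t -> i < k -> y < t ^ k ->
  splice t k x y i.+1 %/ t = splice t k x y i %% t ^ k.-1.
Proof.
move=> t_gt0 ik; have [j ->] : exists j, k = i + j.+1 by exists (k - i.+1); lia.
rewrite /splice.
have -> : i + j.+1 - i.+1 = j by lia.
have -> : i + j.+1 - i = j.+1 by lia.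
have -> : (i + j.+1).-1 = j + i by lia.
move=> hy; have tp m : 0 < t ^ m by rewrite expn_gt0 t_gt0.
rewrite expnSr mulnA divnMDl // -divnMA -expnSr.
rewrite {1}(divn_eq (x %% t ^ j.+1) (t ^ j)) modn_dvdm ?expnS ?dvdn_mull //.
rewrite -expnS mulnDl -mulnA -expnD -addnA modnMDl.
symmetry; apply: modn_small; rewrite expnD.
apply: ltn_pmul_add; first by rewrite ltn_mod.
by rewrite ltn_divLR // -expnD.
Qed.

Lemma card_bigcup_le (I T : finType) (S : {set I}) (X : I -> {set T}) :
  #|\bigcup_(i in S) X i| <= \sum_(i in S) #|X i|.
Proof.
elim/big_rec2: _ => [|i m A _ h]; first by rewrite cards0.
exact: leq_trans (leq_card_setU _ _) (leq_add _ h).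
Qed.

Section Distances.
Variable n : nat.
Implicit Types (a b e : rel 'I_n) (x y u v z : 'I_n).

Lemma uadjC a : symmetric (uadj a).
Proof. by move=> x y; rewrite /uadj orbC. Qed.

Lemma within_mono a r s x y : within a r x y -> r <= s -> within a s x y.
Proof.
move=> h; elim: s => [|s IH]; first by rewrite leqn0 => /eqP <-.
by rewrite leq_eqVlt => /orP[/eqP <- //|]; rewrite ltnS => /IH /= ->.
Qed.

Lemma within_uadj a b : uadj a =2 uadj b -> forall r x y, within a r x y = within b r x y.
Proof.
move=> h; elim=> [//|r IH] x y /=; rewrite IH; congr (_ || _).
by apply: eq_existsb => z; rewrite IH h.
Qed.

Lemma cMAX_uadj a b : uadj a =2 uadj b -> cMAX a =1 cMAX b.
Proof.
move=> /within_uadj h u.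
have hd : dist a =2 dist b by move=> x y; rewrite /dist (eq_find (fun r => h r x y)).
suff hc : ncomp a = ncomp b by rewrite /cMAX hc (eq_bigr _ (fun v _ => hd u v)).
by rewrite /ncomp (eq_imset _ (fun x => @eq_finset _ _ _ (h n x))).
Qed.

Lemma dist_le a r x y : within a r x y -> r < n -> dist a x y <= r.
Proof.
move=> hw hr; rewrite /dist.
have hd : find (fun r => within a r x y) (iota 0 n) <= r.
  rewrite leqNgt; apply/negP => /(before_find 0).
  by rewrite nth_iota // add0n hw.
by rewrite (leq_ltn_trans hd hr).
Qed.

Lemma dist_ge a r x y : 0 < r -> r <= n ^ 2 -> ~~ within a r.-1 x y -> r <= dist a x y.
Proof.
move=> r0 rn hw; rewrite /dist; set d := find _ _; case: ifP => // hd.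
have hwd : within a d x y.
  have hh : has (fun r => within a r x y) (iota 0 n) by rewrite has_find size_iota.
  by have := nth_find 0 hh; rewrite nth_iota // add0n.
rewrite leqNgt; apply: contra hw => dr.
by apply: within_mono hwd _; rewrite -ltnS prednK.
Qed.

Lemma cMAX_le a u r : (forall x y, within a r x y) -> r < n -> cMAX a u <= r.
Proof.
move=> hw rn.
rewrite /cMAX; have -> : ncomp a = 1.
  apply/eqP/cards1P; exists setT; apply/setP => A; rewrite !inE.
  apply/imsetP/eqP => [[x _ ->]|->]; last exists u => //.
    by apply/setP => y; rewrite !inE (within_mono (hw x y) (ltnW rn)).
  by apply/setP => y; rewrite !inE (within_mono (hw u y) (ltnW rn)).
rewrite subnn mul0n addn0; apply/bigmax_leqP => v _; exact: dist_le.
Qed.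

Lemma dist_le_cMAX a u v : dist a u v <= cMAX a u.
Proof. exact: leq_trans (leq_bigmax v) (leq_addr _ _). Qed.

Lemma underlying_uadj a e : underlying_is a e -> uadj a =2 e.
Proof.
by move=> hU x y; have [+ _] := hU x y; rewrite /uadj; case: (a x y); case: (a y x); case: (e x y).
Qed.

Lemma underlying_loopless a e : underlying_is a e -> forall x, ~~ a x x.
Proof. by move=> hU x; apply: (hU x x).2. Qed.

Lemma underlying_deg a e u :
  underlying_is a e -> #|[set v | a u v]| + #|[set v | a v u]| = #|[set v | e u v]|.
Proof.
move=> hU; rewrite -cardsUI.
have -> : [set v | a u v] :&: [set v | a v u] = set0.
  apply/setP => v; rewrite !inE; have [+ _] := hU u v.
  by case: (a u v); case: (a v u); case: (e u v).
rewrite cards0 addn0; apply: eq_card => v; rewrite !inE.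
exact: underlying_uadj hU u v.
Qed.

Definition nb a z := [set y | uadj a z y].

Lemma card_nb_underlying a e z : underlying_is a e -> #|nb a z| = #|[set y | e z y]|.
Proof. by move=> hU; apply: eq_card => y; rewrite !inE (underlying_uadj hU). Qed.

Lemma card_nb_deviate_self a u (S : {set 'I_n}) : u \notin S ->
  #|nb (deviate a u S) u| <= #|S| + #|[set v | a v u]|.
Proof.
move=> uS; apply: leq_trans (leq_card_setU _ _); apply: subset_leq_card.
apply/subsetP => y; rewrite !inE /uadj /deviate eqxx.
by case: (eqVneq y u) => [->|_]; rewrite ?(negbTE uS).
Qed.

Lemma card_nb_deviate_other a u (S : {set 'I_n}) z : z != u ->
  #|nb (deviate a u S) z| <= #|nb a z|.+1.
Proof.
move=> zu; apply: (@leq_trans #|u |: nb a z|); last by rewrite cardsU1; case: (_ \notin _).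
apply/subset_leq_card/subsetP => y; rewrite !inE /uadj /deviate (negbTE zu).
by case: ifP => [/eqP ->|_]; rewrite ?eqxx.
Qed.

Definition ball a u r := [set v | within a r u v].
Definition shell a u r := ball a u r.+1 :\: ball a u r.

Lemma shell0_sub a u : shell a u 0 \subset nb a u.
Proof.
apply/subsetP => v; rewrite !inE /= => /andP[uv /orP[/eqP e|/existsP[z /andP[/eqP <- //]]]].
by rewrite e eqxx in uv.
Qed.

Lemma shellS_sub a u r :
  shell a u r.+1 \subset \bigcup_(z in shell a u r) (nb a z :\: ball a u r).
Proof.
apply/subsetP => v; rewrite !inE => /andP[nv] /=.
case/orP=> [hv|/existsP[z /andP[uz zv]]]; first by move: nv; rewrite /= hv.
have {}uz : within a r.+1 u z := uz.
apply/bigcupP; exists z; rewrite !inE ?zv ?uz ?andbT.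
  by apply: contra nv => uz' /=; apply/orP; right; apply/existsP; exists z; rewrite uz' zv.
by apply: contra nv => hv; apply: within_mono hv _.
Qed.

Lemma card_shell_nb a u r z : z \in shell a u r ->
  #|nb a z :\: ball a u r| <= #|nb a z|.-1.
Proof.
rewrite !inE /= => /andP[nz /orP[hz|/existsP[w /andP[uw wz]]]]; first by rewrite hz in nz.
have wnb : w \in nb a z by rewrite inE uadjC.
rewrite (cardsD1 w (nb a z)) wnb /=; apply/subset_leq_card/subsetP => y.
by rewrite !inE => /andP[ny ->]; rewrite andbT; apply: contraNneq ny => ->.
Qed.

Section MooreBound.
Variables (a : rel 'I_n) (u : 'I_n) (D : nat).
Hypotheses (deg_u : #|nb a u| <= D) (deg_nb : forall z, #|nb a z| <= D.+1).

Lemma card_shell r : #|shell a u r| <= D ^ r.+1.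
Proof.
elim: r => [|r IH]; first by rewrite expn1 (leq_trans (subset_leq_card (shell0_sub a u))).
apply: leq_trans (subset_leq_card (shellS_sub a u r)) _.
apply: leq_trans (card_bigcup_le _ _) _.
apply: (@leq_trans (\sum_(z in shell a u r) D)).
  by apply: leq_sum => z /card_shell_nb h; have := deg_nb z; lia.
by rewrite sum_nat_const expnSr leq_mul2r IH orbT.
Qed.

Lemma card_ball r : #|ball a u r| <= \sum_(i < r.+1) D ^ i.
Proof.
elim: r => [|r IH].
  rewrite big_ord_recr big_ord0 expn0 -(cards1 u); apply/subset_leq_card/subsetP => v.
  by rewrite !inE eq_sym.
rewrite -(cardsID (ball a u r)) big_ord_recr /=.
exact: leq_add (leq_trans (subset_leq_card (subsetIr _ _)) IH) (card_shell r).
Qed.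

Lemma exists_far_vertex r : 0 < r -> r <= n ^ 2 -> \sum_(i < r) D ^ i < n ->
  exists v, r <= dist a u v.
Proof.
move=> r0 rn small.
case: (pickP (fun v => v \notin ball a u r.-1)) => [v|inball].
  by rewrite inE => far; exists v; apply: dist_ge.
have : n <= #|ball a u r.-1|.
  rewrite -{1}(card_ord n) -cardsT; apply/subset_leq_card/subsetP => v _.
  by have /negbFE := inball v.
by move/leq_trans/(_ (card_ball r.-1)); rewrite prednK // leqNgt small.
Qed.

End MooreBound.

End Distances.

Section DeBruijn.
Variables t k : nat.
Hypotheses (t_gt2 : 2 < t) (k_gt0 : 0 < k).
Local Notation n := (t ^ k).

Let t_gt0 : 0 < t. Proof. exact: ltn_trans t_gt2. Qed.
Let expt_gt0 m : 0 < t ^ m. Proof. by rewrite expn_gt0 t_gt0. Qed.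
Let n_split : n = t ^ k.-1 * t. Proof. by rewrite -expnSr prednK. Qed.
Let lt_n a b : a < t ^ k.-1 -> b < t -> a * t + b < n.
Proof. by rewrite n_split; apply: ltn_pmul_add. Qed.

Lemma k_lt_n : k < n. Proof. by apply: ltn_expl; apply: ltn_trans t_gt2. Qed.

(* [shift_rel x y]: y is x with its leading letter dropped and a letter appended. *)
Definition shift_rel (x y : 'I_n) : bool := val y %/ t == val x %% t ^ k.-1.
Definition deBruijn : rel 'I_n := fun x y => (x != y) && (shift_rel x y || shift_rel y x).

Definition append_digit (x : 'I_n) (i : 'I_t) : 'I_n := insubd x (val x %% t ^ k.-1 * t + i).
Definition prepend_digit (x : 'I_n) (i : 'I_t) : 'I_n := insubd x (i * t ^ k.-1 + val x %/ t).

Lemma val_append_digit x i : val (append_digit x i) = val x %% t ^ k.-1 * t + i.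
Proof. by rewrite insubdK // -topredE /= lt_n ?ltn_mod. Qed.

Lemma val_prepend_digit x i : val (prepend_digit x i) = i * t ^ k.-1 + val x %/ t.
Proof.
rewrite insubdK // -topredE /=; apply: leq_trans (ltn_pmul_add (ltn_ord i) _) _.
  by rewrite ltn_divLR // -n_split ltn_ord.
by rewrite n_split mulnC.
Qed.

Lemma shift_relE x y : shift_rel x y = (y \in [set append_digit x i | i : 'I_t]).
Proof.
apply/eqP/imsetP => [e|[i _ ->]].
  have lt_yt : val y %% t < t by rewrite ltn_mod.
  exists (Ordinal lt_yt) => //; apply: val_inj.
  by rewrite val_append_digit -e -divn_eq.
by rewrite val_append_digit divnMDl // divn_small // addn0.
Qed.

Lemma shift_rel_prependE x y : shift_rel y x = (y \in [set prepend_digit x i | i : 'I_t]).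
Proof.
have lt_tk1 : val x %/ t < t ^ k.-1 by rewrite ltn_divLR // -n_split ltn_ord.
apply/eqP/imsetP => [e|[i _ ->]].
  have lt_yt : val y %/ t ^ k.-1 < t by rewrite ltn_divLR // mulnC -n_split ltn_ord.
  exists (Ordinal lt_yt) => //; apply: val_inj.
  by rewrite val_prepend_digit e -divn_eq.
by rewrite val_prepend_digit modnMDl modn_small.
Qed.

Lemma deBruijn_sym : symmetric deBruijn.
Proof. by move=> x y; rewrite /deBruijn eq_sym orbC. Qed.

Lemma uadj_deBruijn : uadj deBruijn =2 deBruijn.
Proof. by move=> x y; rewrite /uadj deBruijn_sym orbb. Qed.

Lemma deBruijn_deg x : #|[set y | deBruijn x y]| <= 2 * t.
Proof.
apply: (@leq_trans #|[set append_digit x i | i : 'I_t] :|: [set prepend_digit x i | i : 'I_t]|).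
  apply/subset_leq_card/subsetP => y; rewrite !inE -shift_relE -shift_rel_prependE.
  by case/andP.
apply: leq_trans (leq_card_setU _ _) _.
by rewrite mul2n -addnn; apply: leq_add; apply: leq_trans (leq_imset_card _ _) _; rewrite card_ord.
Qed.

Lemma deBruijn_mindeg : min_degree_ge deBruijn 2.
Proof.
move=> x; set A := [set append_digit x i | i : 'I_t].
have cardA : #|A| = t.
  rewrite card_imset ?card_ord // => i j /(congr1 val).
  by rewrite !val_append_digit => /addnI /val_inj.
have sub : A :\ x \subset [set y | deBruijn x y].
  by apply/subsetP => y; rewrite !inE /deBruijn shift_relE eq_sym => /andP[-> ->].
apply: leq_trans (subset_leq_card sub); have := cardsD1 x A; rewrite cardA.
by case: (x \in A) => /=; lia.
Qed.

Definition walk_vertex (x y : 'I_n) i : 'I_n := insubd x (splice t k x y i).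

Lemma val_walk_vertex x y i : i <= k -> val (walk_vertex x y i) = splice t k x y i.
Proof. by move=> ik; rewrite insubdK // -topredE /= splice_lt. Qed.

Lemma within_walk_vertex x y i : i <= k -> within deBruijn i x (walk_vertex x y i).
Proof.
elim: i => [|i IH] ik.
  by apply/eqP/val_inj; rewrite val_walk_vertex // splice0.
set w := walk_vertex x y i; set v := walk_vertex x y i.+1.
have xw : within deBruijn i x w := IH (ltnW ik).
have wv : shift_rel w v.
  by rewrite /shift_rel !val_walk_vertex ?(ltnW ik) // splice_shift.
rewrite /=; case: (eqVneq w v) => [<-|wv_ne]; first by rewrite xw.
apply/orP; right; apply/existsP; exists w.
by rewrite xw uadj_deBruijn /deBruijn wv_ne wv.
Qed.

Lemma deBruijn_within x y : within deBruijn k x y.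
Proof.
suff <- : walk_vertex x y k = y by apply: within_walk_vertex.
by apply: val_inj; rewrite val_walk_vertex // spliceK.
Qed.

Lemma card_nb_deBruijn z : #|nb deBruijn z| <= 2 * t.
Proof.
have -> : nb deBruijn z = [set y | deBruijn z y] by apply/setP => y; rewrite !inE uadj_deBruijn.
exact: deBruijn_deg.
Qed.

Lemma cMAX_underlying_deBruijn G u : underlying_is G deBruijn -> cMAX G u <= k.
Proof.
move=> hU; rewrite (@cMAX_uadj _ G deBruijn) => [|x y]; last first.
  by rewrite (underlying_uadj hU) uadj_deBruijn.
exact: cMAX_le deBruijn_within k_lt_n.
Qed.

Hypothesis budget : \sum_(i < k) (2 * t) ^ i < n.

Let k_le_n2 : k <= n ^ 2.
Proof. by apply: leq_trans (ltnW k_lt_n) _; rewrite leq_pmulr. Qed.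

Lemma deBruijn_diameter : diameter deBruijn = k.
Proof.
apply/eqP; rewrite eqn_leq; apply/andP; split.
  apply/bigmax_leqP => x _; apply/bigmax_leqP => y _.
  exact: dist_le (deBruijn_within x y) k_lt_n.
pose x0 : 'I_n := Ordinal (ltn_trans k_gt0 k_lt_n).
have [v kv] := exists_far_vertex (card_nb_deBruijn x0) (fun z => leqW (card_nb_deBruijn z))
  k_gt0 k_le_n2 budget.
exact: leq_trans kv (leq_trans (leq_bigmax v) (leq_bigmax x0)).
Qed.

Lemma deBruijn_MAX_equilibrium G : underlying_is G deBruijn -> MAX_equilibrium G.
Proof.
move=> hU; split=> [|u S uS cardS]; first exact: underlying_loopless hU.
set G' := deviate G u S.
have deg_u : #|nb G' u| <= 2 * t.
  apply: leq_trans (card_nb_deviate_self G uS) _.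
  by rewrite cardS /outdeg (underlying_deg u hU) deBruijn_deg.
have deg_nb z : #|nb G' z| <= (2 * t).+1.
  have [-> | zu] := eqVneq z u; first exact: leqW deg_u.
  apply: leq_trans (card_nb_deviate_other G S zu) _.
  by rewrite ltnS (card_nb_underlying z hU) deBruijn_deg.
have [v kv] := exists_far_vertex deg_u deg_nb k_gt0 k_le_n2 budget.
exact: leq_trans (cMAX_underlying_deBruijn u hU) (leq_trans kv (dist_le_cMAX G' u v)).
Qed.

End DeBruijn.

Theorem mainTheorem15 (t k : nat) :
  3 < t -> 3 < k -> (2 * t) ^ k - 1 < t ^ k * (2 * t - 1) ->
  exists U : rel 'I_(t ^ k),
    [/\ simple_graph U, min_degree_ge U 2, diameter U = k &
        forall G : rel 'I_(t ^ k), underlying_is G U -> MAX_equilibrium G].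
Proof.
move=> t_gt3 k_gt3 hyp.
have t_gt2 : 2 < t by apply: ltnW.
have budget := sum_expn_lt (ltnW (ltnW t_gt2)) hyp.
have k_gt0 : 0 < k by apply: leq_trans k_gt3.
exists (@deBruijn t k); split.
- by split; [exact: deBruijn_sym | move=> x; rewrite /deBruijn eqxx].
- exact: deBruijn_mindeg.
- exact: deBruijn_diameter.
- exact: deBruijn_MAX_equilibrium.
Qed.
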